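(* Let $q\ge2$ be an integer and define $F(y)=\ln\!\Big(\frac{(1-y)^q+(1+y)^q}{2}\Big)$ for $y\in[0,1]$, and $G(z)=\ln F(e^z)$ for $z\in(-\infty,0]$. Then $G$ is concave on $(-\infty,0]$. Consequently, for all $0\le\epsilon\le\tfrac12$ and all $0<x\le1$, \[ F\big((1-2\epsilon)x\big)\cdot F(1) ~\le~ F(1-2\epsilon)\cdot F(x). \]
   Context: Note $F(y)>0$ for $0<y\le1$, so $G$ is well defined on $(-\infty,0]$. *)

From Stdlib Require Import Reals Lra Lia.
Open Scope R_scope.

Definition F (q : nat) (y : R) : R := ln (((1 - y) ^ q + (1 + y) ^ q) / 2).

Definition G (q : nat) (z : R) : R := ln (F q (exp z)).

Definition concave_on (D : R -> Prop) (f : R -> R) : Prop :=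
  forall a b t, D a -> D b -> 0 <= t <= 1 ->
    t * f a + (1 - t) * f b <= f (t * a + (1 - t) * b).

(* Writing y = e^z, one has G'(z) = H(y) with H = N / F, where N(y) = y P'(y)/P(y)
   is the elasticity of P.  Since z |-> e^z is increasing, G is concave on
   (-oo, 0] as soon as H is nonincreasing on (0, 1].  Now N(0) = F(0) = 0 and
   N' = L * F' with F' = P'/P > 0, so by the monotone form of l'Hopital's rule
   (lemma [lhopital_monotone]) it suffices that L is nonincreasing on (0, 1].
   The substitution t = (1-y)/(1+y), which reverses the order, turns L into an
   explicit function Lt of t in [0, 1) whose derivative is a sum of nonnegative
   terms; their signs reduce to the elementary inequalities
   tanh(k s) <= k tanh(s) and tanh(s) <= tanh(k s) for k >= 1 (in the
   variable t = e^(-2s)).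

   The product inequality of the theorem is the
   superadditivity of a concave function on (-oo, 0], applied at ln x and
   ln(1 - 2 eps). *)

From Stdlib Require Import Reals Lra Lia.
From Coquelicot Require Import Coquelicot.
Open Scope R_scope.

Lemma pow_unit_interval (x : R) (k : nat) : 0 <= x <= 1 -> 0 <= x ^ k <= 1.
Proof.
  intros Hx. split; [apply pow_le; lra|].
  rewrite <- (pow1 k). apply pow_incr. lra.
Qed.

Lemma exp_le_compat (a b : R) : a <= b -> exp a <= exp b.
Proof. intros [Hlt| <-]; [left; now apply exp_increasing | lra]. Qed.

Lemma is_derive_continuity_pt (f : R -> R) (x l : R) :
  is_derive f x l -> continuity_pt f x.
Proof.
  intros Hd. apply derivable_continuous_pt. exists l. now apply is_derive_Reals.
Qed.

Lemma mvt_interior (f df : R -> R) (a b : R) : a < b ->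
  (forall x, a <= x <= b -> continuity_pt f x) ->
  (forall x, a < x < b -> is_derive f x (df x)) ->
  exists c, a < c < b /\ f b - f a = df c * (b - a).
Proof.
  intros Hab Hcont Hd.
  assert (pr : forall c, a < c < b -> derivable_pt f c).
  { intros c Hc. exists (df c). apply is_derive_Reals. auto. }
  destruct (MVT f id a b pr (fun c _ => derivable_pt_id c) Hab Hcont
              (fun c _ => derivable_continuous_pt _ _ (derivable_pt_id c)))
    as [c [Hc E]].
  exists c. split; [exact Hc|].
  rewrite derive_pt_id in E.
  rewrite (derive_pt_eq_0 f c (df c) (pr c Hc)) in E
    by (apply is_derive_Reals; auto).
  unfold id in E. lra.
Qed.

Lemma nondecreasing_of_deriv (f df : R -> R) (a b : R) : a <= b ->
  (forall x, a <= x <= b -> continuity_pt f x) ->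
  (forall x, a < x < b -> is_derive f x (df x)) ->
  (forall x, a < x < b -> 0 <= df x) -> f a <= f b.
Proof.
  intros Hab Hcont Hd Hpos.
  destruct (Req_dec a b) as [<-|Hne]; [lra|].
  destruct (mvt_interior f df a b) as [c [Hc E]]; auto; [lra|].
  pose proof (Hpos c Hc). nra.
Qed.

Lemma nonincreasing_of_deriv (f df : R -> R) (a b : R) : a <= b ->
  (forall x, a <= x <= b -> continuity_pt f x) ->
  (forall x, a < x < b -> is_derive f x (df x)) ->
  (forall x, a < x < b -> df x <= 0) -> f b <= f a.
Proof.
  intros Hab Hcont Hd Hneg.
  destruct (Req_dec a b) as [<-|Hne]; [lra|].
  destruct (mvt_interior f df a b) as [c [Hc E]]; auto; [lra|].
  pose proof (Hneg c Hc). nra.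
Qed.

(* A differentiable function on an interval D whose derivative is nonincreasing
   is concave on D: compare the mean slopes on [a, c] and [c, b]. *)
Lemma concave_of_deriv_nonincreasing (D : R -> Prop) (f df : R -> R) :
  (forall a b x, D a -> D b -> a <= x <= b -> D x) ->
  (forall x, D x -> is_derive f x (df x)) ->
  (forall a b, D a -> D b -> a <= b -> df b <= df a) ->
  concave_on D f.
Proof.
  intros Hconv Hd Hmono.
  assert (Hlt : forall a b t, D a -> D b -> a < b -> 0 < t < 1 ->
            t * f a + (1 - t) * f b <= f (t * a + (1 - t) * b)).
  { intros a b t Ha Hb Hab Ht.
    set (c := t * a + (1 - t) * b).
    assert (Hc : a < c < b) by (unfold c; split; nra).
    assert (Hcont : forall x, a <= x <= b -> continuity_pt f x)
      by (intros x Hx; apply (is_derive_continuity_pt _ _ (df x)), Hd, (Hconv a b); auto).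
    destruct (mvt_interior f df a c) as [x1 [Hx1 E1]];
      [lra | intros x Hx; apply Hcont; lra | intros x Hx; apply Hd, (Hconv a b); auto; lra |].
    destruct (mvt_interior f df c b) as [x2 [Hx2 E2]];
      [lra | intros x Hx; apply Hcont; lra | intros x Hx; apply Hd, (Hconv a b); auto; lra |].
    assert (Hslopes : df x2 <= df x1)
      by (apply Hmono; try (apply (Hconv a b)); auto; lra).
    assert (Eca : c - a = (1 - t) * (b - a)) by (unfold c; ring).
    assert (Ebc : b - c = t * (b - a)) by (unfold c; ring).
    rewrite Eca in E1. rewrite Ebc in E2.
    assert (0 <= t * (1 - t) * (b - a) * (df x1 - df x2))
      by (apply Rmult_le_pos; [apply Rmult_le_pos; nra | lra]).
    nra. }
  intros a b t Ha Hb Ht.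
  destruct (Req_dec t 0) as [->|Ht0].
  { replace (0 * a + (1 - 0) * b) with b by ring. lra. }
  destruct (Req_dec t 1) as [->|Ht1].
  { replace (1 * a + (1 - 1) * b) with a by ring. lra. }
  destruct (Rtotal_order a b) as [Hab|[<-|Hab]].
  - apply Hlt; auto; lra.
  - replace (t * a + (1 - t) * a) with a by ring. lra.
  - pose proof (Hlt b a (1 - t) Hb Ha Hab ltac:(lra)) as H.
    replace ((1 - t) * b + (1 - (1 - t)) * a) with (t * a + (1 - t) * b) in H by ring.
    lra.
Qed.

(* For f concave on (-oo, 0], f - f(0) is superadditive there: a and c are
   convex combinations of a + c and 0 with complementary weights. *)
Lemma concave_superadditive (f : R -> R) : concave_on (fun z => z <= 0) f ->
  forall a c, a <= 0 -> c <= 0 -> f (a + c) + f 0 <= f a + f c.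
Proof.
  intros Hconc a c Ha Hc.
  destruct (Req_dec (a + c) 0) as [Hs|Hs].
  { replace a with 0 by lra. replace c with 0 by lra. rewrite Rplus_0_r. lra. }
  set (l := a / (a + c)).
  assert (El : l * (a + c) = a) by (unfold l; field; auto).
  assert (Hl : 0 <= l <= 1) by (split; nra).
  pose proof (Hconc (a + c) 0 l ltac:(lra) ltac:(lra) Hl) as H1.
  pose proof (Hconc (a + c) 0 (1 - l) ltac:(lra) ltac:(lra) ltac:(lra)) as H2.
  replace (l * (a + c) + (1 - l) * 0) with a in H1 by lra.
  replace ((1 - l) * (a + c) + (1 - (1 - l)) * 0) with c in H2 by lra.
  lra.
Qed.

Section MonotoneLHopital.
Variables (f g df dg r : R -> R) (a b : R).
Hypotheses (f_a : f a = 0) (g_a : g a = 0)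
  (f_der : forall x, a <= x <= b -> is_derive f x (df x))
  (g_der : forall x, a <= x <= b -> is_derive g x (dg x))
  (dg_pos : forall x, a < x <= b -> 0 < dg x)
  (df_ratio : forall x, a < x <= b -> df x = r x * dg x)
  (r_noninc : forall x y, a < x -> x <= y -> y <= b -> r y <= r x).

Let f_cont (x : R) : a <= x <= b -> continuity_pt f x.
Proof. intros Hx. exact (is_derive_continuity_pt _ _ _ (f_der x Hx)). Qed.
Let g_cont (x : R) : a <= x <= b -> continuity_pt g x.
Proof. intros Hx. exact (is_derive_continuity_pt _ _ _ (g_der x Hx)). Qed.

(* g increases from g(a) = 0, hence is positive on (a, b]. *)
Lemma lhopital_denominator_pos (x : R) : a < x <= b -> 0 < g x.
Proof.
  intros Hx.
  destruct (mvt_interior g dg a x) as [c [Hc E]]; [lra | intros; apply g_cont; lra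
    | intros; apply g_der; lra |].
  pose proof (dg_pos c ltac:(lra)). nra.
Qed.

(* Key estimate: f - r(x) g vanishes at a and is nondecreasing on [a, x],
   since its derivative is (r - r(x)) g' >= 0 there. *)
Lemma lhopital_ratio_below (x : R) : a < x <= b -> r x * g x <= f x.
Proof.
  intros Hx.
  set (h := fun y => f y - r x * g y).
  assert (H : h a <= h x).
  { apply (nondecreasing_of_deriv h (fun y => df y - r x * dg y) a x); [lra | | |].
    - intros y Hy. apply continuity_pt_minus; [apply f_cont; lra|].
      apply continuity_pt_mult; [apply continuity_pt_const; intros ? ?; reflexivity|].
      apply g_cont; lra.
    - intros y Hy. apply (is_derive_minus f (fun y => r x * g y)); [apply f_der; lra|].
      apply is_derive_scal. apply g_der; lra.
    - intros y Hy. rewrite df_ratio by lra.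
      pose proof (r_noninc y x ltac:(lra) ltac:(lra) ltac:(lra)).
      pose proof (dg_pos y ltac:(lra)). nra. }
  unfold h in H. rewrite f_a, g_a in H. lra.
Qed.

(* (f/g)' = g' (r g - f) / g^2 <= 0 by the previous estimate. *)
Lemma lhopital_monotone (x y : R) : a < x -> x <= y -> y <= b -> f y / g y <= f x / g x.
Proof.
  intros Hx Hxy Hy.
  apply (nonincreasing_of_deriv (fun z => f z / g z)
           (fun z => (df z * g z - f z * dg z) / g z ^ 2) x y); [lra | | |].
  - intros z Hz. pose proof (lhopital_denominator_pos z ltac:(lra)).
    apply continuity_pt_div; [apply f_cont | apply g_cont | ]; lra.
  - intros z Hz. pose proof (lhopital_denominator_pos z ltac:(lra)).
    apply is_derive_div; [apply f_der | apply g_der | ]; lra.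
  - intros z Hz. pose proof (lhopital_denominator_pos z ltac:(lra)).
    pose proof (lhopital_ratio_below z ltac:(lra)).
    pose proof (dg_pos z ltac:(lra)).
    rewrite df_ratio by lra.
    assert (0 < / g z ^ 2) by (apply Rinv_0_lt_compat, pow_lt; lra).
    assert (dg z * (r z * g z - f z) <= 0) by nra.
    replace ((r z * dg z * g z - f z * dg z) / g z ^ 2)
      with (dg z * (r z * g z - f z) * / g z ^ 2) by (field; lra).
    nra.
Qed.
End MonotoneLHopital.

Definition P (n : nat) (y : R) : R := ((1 - y) ^ S (S n) + (1 + y) ^ S (S n)) / 2.
Definition dP (n : nat) (y : R) : R :=
  INR (S (S n)) * ((1 + y) ^ S n - (1 - y) ^ S n) / 2.
Definition d2P (n : nat) (y : R) : R :=
  INR (S (S n)) * INR (S n) * ((1 + y) ^ n + (1 - y) ^ n) / 2.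

Lemma P_lower_bound (n : nat) (y : R) : 0 <= y <= 1 -> 1 + y ^ 2 <= P n y.
Proof.
  intros Hy. unfold P.
  enough (H : forall k, 2 + 2 * y ^ 2 <= (1 - y) ^ S (S k) + (1 + y) ^ S (S k))
    by (specialize (H n); lra).
  induction k as [|k IH]; [simpl; nra|].
  change ((1 - y) ^ S (S (S k))) with ((1 - y) * (1 - y) ^ S (S k)).
  change ((1 + y) ^ S (S (S k))) with ((1 + y) * (1 + y) ^ S (S k)).
  assert ((1 - y) ^ S (S k) <= (1 + y) ^ S (S k)) by (apply pow_incr; lra).
  pose proof (pow_le (1 - y) (S (S k)) ltac:(lra)).
  nra.
Qed.

Lemma P_pos (n : nat) (y : R) : 0 <= y <= 1 -> 0 < P n y.
Proof. intros Hy. pose proof (P_lower_bound n y Hy). pose proof (pow2_ge_0 y). lra. Qed.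

Lemma P_gt_1 (n : nat) (y : R) : 0 < y <= 1 -> 1 < P n y.
Proof.
  intros Hy. pose proof (P_lower_bound n y ltac:(lra)).
  pose proof (pow_lt y 2 ltac:(lra)). lra.
Qed.

Lemma P_at_0 (n : nat) : P n 0 = 1.
Proof. unfold P. rewrite Rminus_0_r, Rplus_0_r, !pow1. field. Qed.

Lemma dP_pos (n : nat) (y : R) : 0 < y <= 1 -> 0 < dP n y.
Proof.
  intros Hy. unfold dP.
  pose proof (pow_unit_interval (1 - y) n ltac:(lra)).
  pose proof (pow_R1_Rle (1 + y) (S n) ltac:(lra)).
  assert ((1 - y) ^ S n < 1) by (change ((1 - y) * (1 - y) ^ n < 1); nra).
  pose proof (lt_0_INR (S (S n)) ltac:(lia)).
  apply Rdiv_lt_0_compat; [nra | lra].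
Qed.

Lemma P_deriv (n : nat) (y : R) : is_derive (P n) y (dP n y).
Proof.
  unfold P, dP. auto_derive; [trivial|].
  change (match n with 0%nat => 1 | S _ => INR n + 1 end) with (INR (S n)).
  rewrite (S_INR (S n)). replace (1 + - y) with (1 - y) by ring. simpl pow. field.
Qed.

Lemma dP_deriv (n : nat) (y : R) : is_derive (dP n) y (d2P n y).
Proof.
  unfold dP, d2P. auto_derive; [trivial|].
  destruct n as [|n]; [simpl; field|].
  cbn [pred]. rewrite !S_INR. replace (1 + - y) with (1 - y) by ring.
  simpl pow. field.
Qed.

Lemma Derive_P (n : nat) (y : R) : Derive (fun x : R => P n x) y = dP n y.
Proof. apply is_derive_unique, P_deriv. Qed.

Lemma Derive_dP (n : nat) (y : R) : Derive (fun x : R => dP n x) y = d2P n y.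
Proof. apply is_derive_unique, dP_deriv. Qed.
Lemma F_eq (n : nat) (y : R) : F (S (S n)) y = ln (P n y).
Proof. reflexivity. Qed.

Lemma F_at_0 (n : nat) : F (S (S n)) 0 = 0.
Proof. rewrite F_eq, P_at_0. apply ln_1. Qed.

Lemma F_pos (n : nat) (y : R) : 0 < y <= 1 -> 0 < F (S (S n)) y.
Proof. intros Hy. rewrite F_eq, <- ln_1. apply ln_increasing; [lra | now apply P_gt_1]. Qed.

Lemma F_deriv (n : nat) (y : R) : 0 <= y <= 1 ->
  is_derive (F (S (S n))) y (dP n y / P n y).
Proof.
  intros Hy. pose proof (P_pos n y Hy).
  change (F (S (S n))) with (fun y => ln (P n y)).
  auto_derive; [split; [exists (dP n y); apply P_deriv | lra]|].
  rewrite Derive_P. field. lra.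
Qed.

(* The elasticity N(y) = y P'(y)/P(y) of P, its derivative, and the ratio
   L = N'/F' = 1 + y P''/P' - y P'/P. *)
Definition elast (n : nat) (y : R) : R := y * dP n y / P n y.
Definition d_elast (n : nat) (y : R) : R :=
  (dP n y + y * d2P n y) / P n y - y * dP n y * dP n y / (P n y * P n y).
Definition elast_ratio (n : nat) (y : R) : R :=
  1 + y * d2P n y / dP n y - y * dP n y / P n y.

Lemma elast_at_0 (n : nat) : elast n 0 = 0.
Proof. unfold elast. rewrite P_at_0. field. Qed.

Lemma elast_deriv (n : nat) (y : R) : 0 <= y <= 1 ->
  is_derive (elast n) y (d_elast n y).
Proof.
  intros Hy. pose proof (P_pos n y Hy).
  unfold elast.
  auto_derive; [repeat split; try (exists (dP n y); apply P_deriv);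
                try (exists (d2P n y); apply dP_deriv); lra|].
  rewrite Derive_P, Derive_dP.
  unfold d_elast. field. lra.
Qed.

Lemma d_elast_factor (n : nat) (y : R) : 0 < y <= 1 ->
  d_elast n y = elast_ratio n y * (dP n y / P n y).
Proof.
  intros Hy. pose proof (P_pos n y ltac:(lra)). pose proof (dP_pos n y Hy).
  unfold d_elast, elast_ratio. field. lra.
Qed.

Lemma G_deriv (n : nat) (z : R) : z <= 0 ->
  is_derive (G (S (S n))) z (elast n (exp z) / F (S (S n)) (exp z)).
Proof.
  intros Hz.
  assert (Hy : 0 < exp z <= 1)
    by (split; [apply exp_pos | rewrite <- exp_0; now apply exp_le_compat]).
  pose proof (P_gt_1 n (exp z) Hy). pose proof (F_pos n (exp z) Hy) as HF.
  rewrite F_eq in HF |- *.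
  change (G (S (S n))) with (fun z => ln (ln (P n (exp z)))).
  auto_derive; [repeat split; try (exists (dP n (exp z)); apply P_deriv); lra|].
  rewrite Derive_P. unfold elast. field. lra.
Qed.
(* The ratio L written in the variable t = (1-y)/(1+y) in [0, 1), so that
   1 - y = t (1 + y): L = (1 + Ct)/2 + (n + 1) Tt. *)
Definition Ct (n : nat) (t : R) : R := t * (1 + t ^ n) / (1 + t * t * t ^ n).
Definition Tt (n : nat) (t : R) : R :=
  (1 - t) * (1 + t) * (1 + t) * t ^ n / (2 * (1 + t * t * t ^ n) * (1 - t * t ^ n)).
Definition Lt (n : nat) (t : R) : R := (1 + Ct n t) / 2 + INR (S n) * Tt n t.

Lemma elast_ratio_in_t (n : nat) (y : R) : 0 < y <= 1 ->
  elast_ratio n y = Lt n ((1 - y) / (1 + y)).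
Proof.
  intros Hy. set (t := (1 - y) / (1 + y)).
  assert (Hb : 1 - y = t * (1 + y)) by (unfold t; field; lra).
  assert (Ht0 : 0 <= t) by (unfold t; apply Rdiv_le_0_compat; lra).
  assert (Ht : t < 1) by nra.
  pose proof (pow_unit_interval t n ltac:(lra)) as Hu.
  pose proof (pow_R1_Rle (1 + y) n ltac:(lra)) as HA.
  unfold elast_ratio, dP, d2P, P, Lt, Ct, Tt.
  rewrite <- !tech_pow_Rmult, Hb, Rpow_mult_distr.
  set (u := t ^ n) in *. set (A := (1 + y) ^ n) in *.
  rewrite !S_INR. pose proof (pos_INR n).
  assert (t * u < 1) by nra.
  assert (0 <= (1 - y) * u <= 1 - y) by (split; nra).
  assert (0 < u * A + A) by nra.
  unfold t. field. repeat split; nra.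
Qed.

(* Ingredients of Lt': the derivative of Ct, and the two factors of the
   logarithmic derivative of Tt (with t = e^(-2s) they read
   (n+1) coth((n+1) s) - coth s and (n+2) tanh((n+2) s) - 2 tanh s). *)
Definition dCt (n : nat) (t : R) : R :=
  (1 - t * t * t ^ n * t ^ n + INR (S n) * t ^ n * (1 - t * t))
  / ((1 + t * t * t ^ n) * (1 + t * t * t ^ n)).
Definition coth_gap (n : nat) (t : R) : R :=
  INR (S n) * (1 + t * t ^ n) / (1 - t * t ^ n) - (1 + t) / (1 - t).
Definition tanh_gap (n : nat) (t : R) : R :=
  INR (S (S n)) * (1 - t * t * t ^ n) / (1 + t * t * t ^ n) - 2 * (1 - t) / (1 + t).

Lemma pow_pred_mul (n : nat) (t : R) : t <> 0 ->
  INR n * t ^ pred n = INR n * t ^ n / t.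
Proof. intros Ht. destruct n; simpl; field; auto. Qed.

(* Lt is differentiable on [0, 1), in particular continuous at t = 0. *)
Lemma Lt_ex_derive (n : nat) (t : R) : 0 <= t < 1 -> ex_derive (Lt n) t.
Proof.
  intros Ht. pose proof (pow_unit_interval t n ltac:(lra)).
  assert (0 <= t * t * t ^ n) by (apply Rmult_le_pos; nra).
  assert (t * t ^ n < 1) by nra.
  unfold Lt, Ct, Tt. auto_derive. repeat split; try lra.
  repeat apply Rmult_integral_contrapositive_currified; lra.
Qed.

Lemma Ct_deriv (n : nat) (t : R) : 0 < t < 1 -> is_derive (Ct n) t (dCt n t).
Proof.
  intros Ht. pose proof (pow_unit_interval t n ltac:(lra)).
  assert (0 <= t * t * t ^ n) by (apply Rmult_le_pos; nra).
  unfold Ct, dCt. auto_derive; [lra|].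
  rewrite pow_pred_mul by lra. rewrite S_INR. field. lra.
Qed.

Lemma Tt_deriv (n : nat) (t : R) : 0 < t < 1 ->
  is_derive (Tt n) t (Tt n t / (2 * t) * (coth_gap n t + tanh_gap n t)).
Proof.
  intros Ht. pose proof (pow_unit_interval t n ltac:(lra)).
  assert (0 <= t * t * t ^ n) by (apply Rmult_le_pos; nra).
  assert (t * t ^ n < 1) by nra.
  unfold Tt. auto_derive.
  { repeat apply Rmult_integral_contrapositive_currified; lra. }
  rewrite pow_pred_mul by lra. unfold coth_gap, tanh_gap. rewrite !S_INR.
  field. repeat split; lra.
Qed.

(* tanh(k s) <= k tanh(s), written in t = e^(-2s) and cleared of denominators. *)
Lemma tanh_multiple_le (k : nat) (t : R) : 0 <= t <= 1 ->
  (1 + t) * (1 - t ^ k) <= INR k * (1 + t ^ k) * (1 - t).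
Proof.
  intros Ht. induction k as [|k IH]; [simpl; lra|].
  rewrite <- tech_pow_Rmult, S_INR.
  pose proof (pow_unit_interval t k Ht) as Hv.
  set (v := t ^ k) in *.
  assert (Hstep : (1 - t * v) * (1 + v) * (1 + t)
                  = (1 - v) * (1 + t * v) * (1 + t) + (1 - t) * (1 + t * v) * (1 + v)
                    - (1 - t) * (1 - v) * (1 - t * v)) by ring.
  assert (0 <= (1 - t) * (1 - v) * (1 - t * v))
    by (apply Rmult_le_pos; [apply Rmult_le_pos|]; nra).
  assert ((1 + t * v) * ((1 + t) * (1 - v)) <= (1 + t * v) * (INR k * (1 + v) * (1 - t)))
    by (apply Rmult_le_compat_l; nra).
  apply Rmult_le_reg_r with (1 + v); [lra | nra].
Qed.

(* First factor of Tt'/Tt is nonnegative: tanh_multiple_le with k = n + 1. *)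
Lemma coth_gap_nonneg (n : nat) (t : R) : 0 < t < 1 -> 0 <= coth_gap n t.
Proof.
  intros Ht. pose proof (tanh_multiple_le (S n) t ltac:(lra)) as H.
  rewrite <- tech_pow_Rmult in H.
  pose proof (pow_unit_interval t n ltac:(lra)).
  assert (t * t ^ n < 1) by nra.
  unfold coth_gap.
  replace (INR (S n) * (1 + t * t ^ n) / (1 - t * t ^ n) - (1 + t) / (1 - t))
    with ((INR (S n) * (1 + t * t ^ n) * (1 - t) - (1 + t) * (1 - t * t ^ n))
          / ((1 - t * t ^ n) * (1 - t))) by (field; lra).
  apply Rdiv_le_0_compat; [lra | apply Rmult_lt_0_compat; lra].
Qed.

(* Second factor is nonnegative since t^(n+2) <= t and n + 2 >= 2. *)
Lemma tanh_gap_nonneg (n : nat) (t : R) : 0 < t < 1 -> 0 <= tanh_gap n t.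
Proof.
  intros Ht. pose proof (pow_unit_interval t n ltac:(lra)).
  set (w := t * t * t ^ n).
  assert (0 <= w <= t) by (unfold w; split; [apply Rmult_le_pos|]; nra).
  pose proof (pos_INR n).
  unfold tanh_gap. fold w. rewrite !S_INR.
  replace ((INR n + 1 + 1) * (1 - w) / (1 + w) - 2 * (1 - t) / (1 + t))
    with (((INR n + 1 + 1) * (1 - w) * (1 + t) - 2 * (1 - t) * (1 + w))
          / ((1 + w) * (1 + t))) by (field; lra).
  apply Rdiv_le_0_compat; [|apply Rmult_lt_0_compat; lra].
  assert (0 <= (1 - w) * (1 + t) - (1 - t) * (1 + w)) by nra.
  assert (0 <= INR n * ((1 - w) * (1 + t))) by (apply Rmult_le_pos; nra).
  nra.
Qed.

Lemma Tt_nonneg (n : nat) (t : R) : 0 < t < 1 -> 0 <= Tt n t.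
Proof.
  intros Ht. pose proof (pow_unit_interval t n ltac:(lra)).
  assert (0 <= t * t * t ^ n) by (apply Rmult_le_pos; nra).
  assert (t * t ^ n < 1) by nra.
  unfold Tt. apply Rdiv_le_0_compat.
  - repeat apply Rmult_le_pos; lra.
  - repeat apply Rmult_lt_0_compat; lra.
Qed.

Lemma dCt_nonneg (n : nat) (t : R) : 0 < t < 1 -> 0 <= dCt n t.
Proof.
  intros Ht. pose proof (pow_unit_interval t n ltac:(lra)).
  assert (0 <= t * t * t ^ n) by (apply Rmult_le_pos; nra).
  assert (0 <= t * t * t ^ n * t ^ n <= 1) by (split; nra).
  assert (0 <= INR (S n) * t ^ n * (1 - t * t))
    by (apply Rmult_le_pos; [apply Rmult_le_pos; [apply pos_INR|]|]; nra).
  unfold dCt. apply Rdiv_le_0_compat; nra.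
Qed.

(* Lt is nondecreasing on [0, 1): every term of Lt' is nonnegative. *)
Lemma Lt_nondecreasing (n : nat) (t1 t2 : R) : 0 <= t1 -> t1 <= t2 -> t2 < 1 ->
  Lt n t1 <= Lt n t2.
Proof.
  intros H1 H12 H2.
  apply (nondecreasing_of_deriv (Lt n)
    (fun t => dCt n t / 2 + INR (S n) * (Tt n t / (2 * t) * (coth_gap n t + tanh_gap n t))));
    [lra | | |].
  - intros t Ht. apply (is_derive_continuity_pt _ _ (Derive (Lt n) t)).
    apply Derive_correct, Lt_ex_derive. lra.
  - intros t Ht. unfold Lt.
    apply (is_derive_plus (fun t => (1 + Ct n t) / 2) (fun t => INR (S n) * Tt n t)).
    + pose proof (Ct_deriv n t ltac:(lra)) as HC.
      auto_derive; [now exists (dCt n t)|].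
      rewrite (is_derive_unique (fun x : R => Ct n x) _ _ HC). field.
    + apply is_derive_scal, Tt_deriv. lra.
  - intros t Ht.
    pose proof (dCt_nonneg n t ltac:(lra)).
    pose proof (coth_gap_nonneg n t ltac:(lra)).
    pose proof (tanh_gap_nonneg n t ltac:(lra)).
    pose proof (pos_INR (S n)).
    assert (0 <= Tt n t / (2 * t)) by (apply Rdiv_le_0_compat; [apply Tt_nonneg|]; lra).
    assert (0 <= INR (S n) * (Tt n t / (2 * t) * (coth_gap n t + tanh_gap n t)))
      by (apply Rmult_le_pos; [|apply Rmult_le_pos]; lra).
    lra.
Qed.

Lemma mobius_antitone (y1 y2 : R) : 0 < y1 -> y1 <= y2 ->
  (1 - y2) / (1 + y2) <= (1 - y1) / (1 + y1).
Proof.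
  intros H1 H12.
  replace ((1 - y2) / (1 + y2)) with (2 * / (1 + y2) - 1) by (field; lra).
  replace ((1 - y1) / (1 + y1)) with (2 * / (1 + y1) - 1) by (field; lra).
  assert (/ (1 + y2) <= / (1 + y1)) by (apply Rinv_le_contravar; lra). lra.
Qed.

Lemma mobius_range (y : R) : 0 < y <= 1 -> 0 <= (1 - y) / (1 + y) < 1.
Proof.
  intros Hy. split; [apply Rdiv_le_0_compat; lra|].
  apply Rmult_lt_reg_r with (1 + y); [lra|].
  replace ((1 - y) / (1 + y) * (1 + y)) with (1 - y) by (field; lra). lra.
Qed.

Lemma elast_ratio_nonincreasing (n : nat) (y1 y2 : R) : 0 < y1 -> y1 <= y2 -> y2 <= 1 ->
  elast_ratio n y2 <= elast_ratio n y1.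
Proof.
  intros H1 H12 H2.
  rewrite !elast_ratio_in_t by lra.
  apply Lt_nondecreasing; [apply mobius_range; lra | apply mobius_antitone; lra
                          | apply mobius_range; lra].
Qed.

Lemma elast_over_F_nonincreasing (n : nat) (y1 y2 : R) : 0 < y1 -> y1 <= y2 -> y2 <= 1 ->
  elast n y2 / F (S (S n)) y2 <= elast n y1 / F (S (S n)) y1.
Proof.
  apply (lhopital_monotone (elast n) (F (S (S n))) (d_elast n)
           (fun y => dP n y / P n y) (elast_ratio n) 0 1).
  - apply elast_at_0.
  - apply F_at_0.
  - apply elast_deriv.
  - apply F_deriv.
  - intros y Hy. apply Rdiv_lt_0_compat; [apply dP_pos | apply P_pos]; lra.
  - apply d_elast_factor.
  - intros u v Hu Huv Hv. now apply elast_ratio_nonincreasing.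
Qed.

Lemma G_concave (n : nat) : concave_on (fun z => z <= 0) (G (S (S n))).
Proof.
  apply (concave_of_deriv_nonincreasing _ _
           (fun z => elast n (exp z) / F (S (S n)) (exp z))).
  - intros a b x _ Hb Hx. lra.
  - apply G_deriv.
  - intros a b _ Hb Hab.
    apply elast_over_F_nonincreasing; [apply exp_pos | now apply exp_le_compat |].
    rewrite <- exp_0. now apply exp_le_compat.
Qed.

(* F(e x) F(1) <= F(e) F(x) for e, x in (0, 1]: superadditivity of the
   concave G at ln e and ln x, exponentiated. *)
Lemma F_product_inequality (n : nat) (e x : R) : 0 < e <= 1 -> 0 < x <= 1 ->
  F (S (S n)) (e * x) * F (S (S n)) 1 <= F (S (S n)) e * F (S (S n)) x.
Proof.
  intros He Hx.
  assert (Hln : forall y, 0 < y <= 1 -> ln y <= 0)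
    by (intros y Hy; rewrite <- ln_1; apply ln_le; lra).
  pose proof (concave_superadditive _ (G_concave n) (ln e) (ln x)
                (Hln e He) (Hln x Hx)) as H.
  unfold G in H. rewrite exp_plus, !exp_ln, exp_0 in H by lra.
  pose proof (F_pos n (e * x) ltac:(split; nra)).
  pose proof (F_pos n 1 ltac:(lra)). pose proof (F_pos n e He). pose proof (F_pos n x Hx).
  rewrite <- !ln_mult in H by assumption.
  apply exp_le_compat in H. rewrite !exp_ln in H by (apply Rmult_lt_0_compat; assumption).
  exact H.
Qed.

Theorem mainTheorem4 (q : nat) (hq : (2 <= q)%nat) :
  concave_on (fun z => z <= 0) (G q) /\
  (forall eps x : R, 0 <= eps <= 1/2 -> 0 < x <= 1 ->
     F q ((1 - 2 * eps) * x) * F q 1 <= F q (1 - 2 * eps) * F q x).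
Proof.
  destruct q as [|[|n]]; [lia | lia |].
  split; [apply G_concave|].
  intros eps x Heps Hx.
  destruct (Req_dec eps (1/2)) as [->|Hne].
  - replace (1 - 2 * (1/2)) with 0 by field.
    rewrite Rmult_0_l, F_at_0, Rmult_0_l, Rmult_0_l. lra.
  - apply F_product_inequality; [lra | exact Hx].
Qed.
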